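(* Let $x=(x_1,\dots,x_p)$ and $y=(y_1,\dots,y_q)$ be disjoint tuples of variables, let $G(x)$, $H(y)$, $K(y)$ be homogeneous polynomials with $G\cdot H$ and $K$ homogeneous of the same degree $d$, and let $F = G(x)H(y)+K(y)$. Let $\alpha=\partial/\partial x_j$ for some $j$. Then $$r(F) \geq \big(\mathrm{al}(\alpha\circ G)-\mathrm{al}(\alpha^2\circ G)\big)\cdot \mathrm{al}(H).$$ In particular, for any $a\ge 1$, $r(x_1^a H(y)+K(y)) \geq \mathrm{al}(H)$.
   Context: Apolarity: differential operators $\partial/\partial x_i$, $\partial/\partial y_i$ act on polynomials by differentiation, written $\Theta\circ F$. $\mathrm{al}(G)$ is the apolar length: the dimension over $\mathbb{C}$ of the space of all partial derivatives of all orders of $G$ (including $G$ itself; $0$ if $G=0$). $r(F)$ is the Waring rank of $F$: the least $r$ with $F=\sum_{i=1}^r c_i\ell_i^d$ for linear forms $\ell_i$ and scalars $c_i$. *)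

From HB Require Import structures.
From mathcomp Require Import all_boot all_order all_algebra.
From Stdlib Require Import ClassicalEpsilon.
Set Implicit Arguments. Unset Strict Implicit. Unset Printing Implicit Defensive.
Import Order.TTheory GRing.Theory.
Local Open Scope ring_scope.

(* A monomial in n variables is an exponent vector m : 'I_n -> nat,
   standing for  prod_i x_i^(m i). *)
Definition monom (n : nat) := {ffun 'I_n -> nat}.

(* A polynomial in n variables over R: its coefficient function.
   (All polynomials considered below are homogeneous, hence finitely supported.) *)
Definition mpoly (R : Type) (n : nat) := monom n -> R.

Section MPoly.
Variable R : fieldType.

Definition mzero {n} : mpoly R n := fun _ => 0.
Definition mone {n} : mpoly R n := fun m => if m == [ffun => 0%N] then 1 else 0.
Definition madd {n} (f g : mpoly R n) : mpoly R n := fun m => f m + g m.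

Definition mdeg {n} (m : monom n) : nat := (\sum_(i < n) m i)%N.

(* product: (f g)_m = sum_{a + b = m} f_a g_b *)
Definition mmul {n} (f g : mpoly R n) : mpoly R n := fun m =>
  \sum_(a : {ffun 'I_n -> 'I_(mdeg m).+1} | [forall i, (a i <= m i)%N])
     f [ffun i => val (a i)] * g [ffun i => (m i - a i)%N].

Definition mexp {n} (f : mpoly R n) (k : nat) : mpoly R n := iter k (mmul f) mone.

Definition mono1 {n} (i : 'I_n) : monom n := [ffun k => nat_of_bool (k == i)].
Definition mvar {n} (i : 'I_n) : mpoly R n := fun m => if m == mono1 i then 1 else 0.
Definition lin {n} (c : 'I_n -> R) : mpoly R n :=
  fun m => \sum_(i < n) (if m == mono1 i then c i else 0).

Definition homog {n} (e : nat) (f : mpoly R n) : Prop :=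
  forall m, f m != 0 -> mdeg m = e.

Definition pderiv {n} (j : 'I_n) (f : mpoly R n) : mpoly R n :=
  fun m => (m j).+1%:R * f [ffun k => (m k + nat_of_bool (k == j))%N].

Definition deriv_seq {n} (s : seq 'I_n) (f : mpoly R n) : mpoly R n :=
  foldr pderiv f s.

Definition lin_indep {n} (fs : seq (mpoly R n)) : Prop :=
  forall c : 'I_(size fs) -> R,
    (forall m, \sum_(i < size fs) c i * nth mzero fs i m = 0) -> forall i, c i = 0.

(* k is the dimension of the span of all partial derivatives (of all orders,
   including order 0) of f, i.e. the maximal size of a linearly independent
   family of such derivatives *)
Definition al_is {n} (f : mpoly R n) (k : nat) : Prop :=
  (exists ss : seq (seq 'I_n), size ss = k /\
       lin_indep (map (fun s => deriv_seq s f) ss)) /\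
  (forall ss : seq (seq 'I_n),
       lin_indep (map (fun s => deriv_seq s f) ss) -> (size ss <= k)%N).

Definition al {n} (f : mpoly R n) : nat := epsilon (inhabits 0%N) (al_is f).

Definition waring_decomp {n} (F : mpoly R n) (d r : nat) : Prop :=
  exists (c : 'I_r -> R) (l : 'I_r -> 'I_n -> R),
    forall m, F m = \sum_(i < r) c i * mexp (lin (l i)) d m.

Definition waring_rank {n} (F : mpoly R n) (d : nat) : nat :=
  epsilon (inhabits 0%N)
    (fun r => waring_decomp F d r /\ forall r', waring_decomp F d r' -> (r <= r')%N).

(* embeddings of polynomials in x = (x_1..x_p) resp. y = (y_1..y_q)
   into polynomials in (x, y), variables of x first. *)
Definition emb_x {p q} (f : mpoly R p) : mpoly R (p + q) := fun m =>
  if [forall k : 'I_q, m (rshift p k) == 0%N] then f [ffun i => m (lshift q i)] else 0.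
Definition emb_y {p q} (f : mpoly R q) : mpoly R (p + q) := fun m =>
  if [forall i : 'I_p, m (lshift q i) == 0%N] then f [ffun k => m (rshift p k)] else 0.

Definition GHK {p q} (G : mpoly R p) (H K : mpoly R q) : mpoly R (p + q) :=
  madd (mmul (emb_x G) (emb_y H)) (emb_y K).

End MPoly.

Arguments mzero {R n}.
Arguments mone {R n}.
Arguments mvar {R n}.
Arguments mono1 {n}.

From HB Require Import structures.
From mathcomp Require Import all_boot all_order all_algebra.
From mathcomp Require Import ring zify.
From Stdlib Require Import ClassicalEpsilon Classical_Prop FunctionalExtensionality.
Set Implicit Arguments. Unset Strict Implicit. Unset Printing Implicit Defensive.
Import GRing.Theory.
Local Open Scope ring_scope.

(* Write [alpha] for [pderiv j].  If [F = \sum_(i < r) c_i (L_i)^d], every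
   derivative [deriv_seq s (alpha F)] is a combination of the powers [L_i^k] whose
   coefficient vector depends only on [s].  Integrating once along [x_j] turns the
   coefficient vector of [deriv_seq s (alpha (alpha F))] into that of
   [deriv_seq s (alpha F)], except for derivatives of top order, whose coefficient
   vectors are supported on the constants [L_i^0] and so span at most [r] dimensions.
   Hence [al (alpha F) - al (alpha (alpha F)) <= r].
   For [F = G(x) H(y) + K(y)] and [j] an [x]-variable, [alpha F = (alpha G)(x) H(y)];
   the derivatives of a product of polynomials in disjoint variables are the products
   of their derivatives, so [al ((alpha G) H) = al (alpha G) * al H], and likewise
   for [alpha (alpha G)].  For [G = x_0^a] with [a >= 1], [alpha G] is a nonzero form
   whose derivative lowers its apolar length, so the factor in front of [al H] is
   positive. *)

Section Monomials.
Variable n : nat.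
Implicit Types (m : monom n) (i j : 'I_n).

Definition mincr m j : monom n := [ffun k => (m k + (k == j))%N].
Definition mdecr m j : monom n := [ffun k => (m k - (k == j))%N].

Lemma leq_mdeg m i : (m i <= mdeg m)%N.
Proof. by rewrite /mdeg (bigD1 i) //= leq_addr. Qed.

Lemma mdeg_mincr m j : mdeg (mincr m j) = (mdeg m).+1.
Proof.
rewrite /mdeg (eq_bigr (fun k => m k + (k == j))%N) => [|k _]; last by rewrite ffunE.
by rewrite big_split /= -/(mdeg m) (bigD1 j) //= eqxx big1 ?addn1 // => k /negPf ->.
Qed.

Lemma mincrK m i : (0 < m i)%N -> mincr (mdecr m i) i = m.
Proof.
move=> mi_gt0; apply/ffunP => k; rewrite !ffunE.
by case: eqP => [->|_]; rewrite ?addn0 ?subn0 // addn1 subn1 prednK.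
Qed.

Lemma mdeg_mdecr m i : (0 < m i)%N -> mdeg m = (mdeg (mdecr m i)).+1.
Proof. by move=> mi_gt0; rewrite -(mdeg_mincr _ i) mincrK. Qed.

Lemma mdeg_eq0 m : (mdeg m == 0)%N = (m == [ffun => 0%N]).
Proof.
apply/idP/eqP => [/eqP m0|->]; last by rewrite /mdeg big1 // => i _; rewrite ffunE.
by apply/ffunP => i; rewrite ffunE; apply/eqP; rewrite -leqn0 -m0 leq_mdeg.
Qed.

End Monomials.

Section Derivatives.
Variables (R : fieldType) (n : nat).
Implicit Types (f : mpoly R n) (s : seq 'I_n).

Lemma deriv_seq_rcons f s j : deriv_seq (rcons s j) f = deriv_seq s (pderiv j f).
Proof. by rewrite /deriv_seq foldr_rcons. Qed.

Lemma mdeg_deriv_seq f e s m :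
  homog e f -> deriv_seq s f m != 0 -> (mdeg m + size s)%N = e.
Proof.
move=> f_homog; elim: s m => [|j s IH] m /=; first by rewrite addn0; apply: f_homog.
rewrite /pderiv mulf_eq0 negb_or => /andP[_ /IH].
by rewrite -/(mincr m j) mdeg_mincr addSnnS.
Qed.

Lemma homog_deriv_seq f e s : homog e f -> homog (e - size s) (deriv_seq s f).
Proof. by move=> f_homog m /(mdeg_deriv_seq f_homog) <-; rewrite addnK. Qed.

Lemma deriv_seq_eq0 f e s m : homog e f -> (e < size s)%N -> deriv_seq s f m = 0.
Proof.
move=> f_homog lt_es; apply/eqP; apply: contraT => /(mdeg_deriv_seq f_homog) deg_m.
by move: lt_es; rewrite -deg_m ltnNge leq_addl.
Qed.

End Derivatives.

Section FreeSeq.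
Variables (K : fieldType) (vT : vectType K).
Implicit Types X : seq vT.

Lemma free_seqP X : free X <->
  (forall k : nat -> K, \sum_(i < size X) k i *: X`_i = 0 ->
     forall i, (i < size X)%N -> k i = 0).
Proof.
split=> [/(@freeP _ _ _ (in_tuple X)) freeX k k0 i ltiX | freeX].
  exact: (freeX (fun o : 'I_(size X) => k o) k0 (Ordinal ltiX)).
apply/(@freeP _ _ _ (in_tuple X)) => k k0 i.
pose kn x := if insub x is Some o then k o else 0.
have knE (o : 'I_(size X)) : kn o = k o by rewrite /kn valK.
rewrite -knE; apply: freeX (ltn_ord i); rewrite -[RHS]k0; apply: eq_bigr => o _.
by rewrite knE.
Qed.

Lemma memv_spanP X v : v \in <<X>>%VS <->
  exists k : nat -> K, v = \sum_(i < size X) k i *: X`_i.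
Proof.
split=> [/(coord_span (X := in_tuple X)) -> | [k ->]].
  exists (fun x => if insub x is Some o then coord (in_tuple X) o v else 0).
  by apply: eq_bigr => o _; rewrite valK.
by apply: memv_suml => i _; apply/memvZ/memv_span/mem_nth.
Qed.

Lemma exists_free_span (A : Type) (h : A -> vT) (L : seq A) :
  exists L', free (map h L') /\ (<<map h L'>> = <<map h L>>)%VS.
Proof.
elim: L => [|a L [L' [freeL' spanL']]]; first by exists [::]; rewrite nil_free.
have [ha|ha] := boolP (h a \in <<map h L'>>%VS).
  exists L'; split => //=; rewrite span_cons -spanL'.
  by apply/esym/addv_idPr; rewrite -memvE.
by exists (a :: L'); rewrite /= free_cons ha freeL' !span_cons spanL'.
Qed.

End FreeSeq.

Section LinIndep.
Variables (R : fieldType) (n : nat).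

Lemma lin_indepP (fs : seq (mpoly R n)) : lin_indep fs <->
  (forall c : nat -> R, (forall m, \sum_(i < size fs) c i * nth mzero fs i m = 0) ->
     forall i, (i < size fs)%N -> c i = 0).
Proof.
split=> [indep c c0 i ltifs | indep c c0 i].
  exact: (indep (fun o : 'I_(size fs) => c o) c0 (Ordinal ltifs)).
pose cn x := if insub x is Some o then c o else 0.
have cnE (o : 'I_(size fs)) : cn o = c o by rewrite /cn valK.
rewrite -cnE; apply: indep (ltn_ord i) => m; rewrite -[RHS](c0 m).
by apply: eq_bigr => o _; rewrite cnE.
Qed.

Lemma lin_indep_cons (f : mpoly R n) gs m0 :
  lin_indep gs -> (forall i, nth mzero gs i m0 = 0) -> f m0 != 0 -> lin_indep (f :: gs).
Proof.
move=> /lin_indepP indep gs_m0 f_m0; apply/lin_indepP => c c0.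
have c0_0 : c 0%N = 0.
  have := c0 m0; rewrite big_ord_recl /= big1 ?addr0 => [|i _]; last by rewrite gs_m0 mulr0.
  by move/eqP; rewrite mulf_eq0 (negbTE f_m0) orbF => /eqP.
case=> [//|i] /=; rewrite ltnS; apply: (indep (fun k => c k.+1)) => m.
by have := c0 m; rewrite big_ord_recl /= c0_0 mul0r add0r.
Qed.

End LinIndep.

Lemma sum_enum_val (V : nmodType) (T : finType) (G : T -> V) :
  \sum_(k < #|{: T}|) G (enum_val k) = \sum_t G t.
Proof. by rewrite -(big_enum_val (A := {: T})). Qed.

Section RowEncoding.
Variables (R : fieldType) (n D : nat).
Implicit Types f g : mpoly R n.

(* Polynomials whose exponents are all at most [D] are determined by their
   coefficients on the box {0..D}^n, which we list as a row vector. *)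
Definition box := {ffun 'I_n -> 'I_D.+1}.
Definition box_monom (b : box) : monom n := [ffun i => nat_of_ord (b i)].
Definition bounded f := forall m, f m != 0 -> forall i, (m i <= D)%N.
Definition mrow f : 'rV[R]_#|{: box}| := \row_k f (box_monom (enum_val k)).

Lemma mrowE f b : mrow f 0 (enum_rank b) = f (box_monom b).
Proof. by rewrite mxE enum_rankK. Qed.

Lemma box_monom_surj (m : monom n) : (forall i, m i <= D)%N -> exists b, box_monom b = m.
Proof.
move=> m_le; exists [ffun i => inord (m i)]; apply/ffunP => i.
by rewrite !ffunE inordK // ltnS.
Qed.

Lemma bounded0 : bounded mzero.
Proof. by move=> m; rewrite eqxx. Qed.

Lemma mrow0 : mrow mzero = 0.
Proof. by apply/rowP => k; rewrite !mxE. Qed.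

Lemma mrow_lincomb k (c : nat -> R) (g : nat -> mpoly R n) :
  mrow (fun m => \sum_(i < k) c i * g i m) = \sum_(i < k) c i *: mrow (g i).
Proof. by apply/rowP => x; rewrite !mxE summxE; apply: eq_bigr => i _; rewrite !mxE. Qed.

Lemma bounded_lincomb k (c : nat -> R) (g : nat -> mpoly R n) :
  (forall i, bounded (g i)) -> bounded (fun m => \sum_(i < k) c i * g i m).
Proof.
move=> gD m nz i; rewrite leqNgt; apply: contra nz => ltDi.
apply/eqP/big1 => x _; have [->|/gD/(_ i)] := eqVneq (g x m) 0; first by rewrite mulr0.
by rewrite leqNgt ltDi.
Qed.

Lemma mrow_inj f g : bounded f -> bounded g -> mrow f = mrow g -> f = g.
Proof.
move=> fD gD fg; apply: functional_extensionality => m.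
have [m_le|] := boolP [forall i, m i <= D]%N.
  have [b <-] := box_monom_surj (fun i => (forallP m_le) i).
  by rewrite -!mrowE fg.
rewrite negb_forall => /existsP[i]; rewrite -ltnNge => ltDi.
have out h : bounded h -> h m = 0.
  by move=> hD; apply/eqP; apply: contraT => /hD/(_ i); rewrite leqNgt ltDi.
by rewrite !out.
Qed.

Lemma lin_indep_free fs :
  (forall i, bounded (nth mzero fs i)) -> lin_indep fs <-> free (map mrow fs).
Proof.
move=> fsD; rewrite lin_indepP free_seqP size_map.
have nth_mrow i : (i < size fs)%N -> (map mrow fs)`_i = mrow (nth mzero fs i).
  by move=> ltifs; rewrite (nth_map mzero).
have rowE (c : nat -> R) : \sum_(i < size fs) c i *: (map mrow fs)`_i =
    mrow (fun m => \sum_(i < size fs) c i * nth mzero fs i m).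
  by rewrite mrow_lincomb; apply: eq_bigr => i _; rewrite nth_mrow.
split=> indep c c0; apply: indep.
  move=> m; rewrite rowE -mrow0 in c0.
  exact: (congr1 (fun h : mpoly R n => h m) (mrow_inj (bounded_lincomb fsD) bounded0 c0)).
by rewrite rowE -mrow0; congr mrow; apply: functional_extensionality.
Qed.

End RowEncoding.

Lemma lin_indep_size_le (R : fieldType) n D (fs gs : seq (mpoly R n)) :
  (forall i, bounded D (nth mzero fs i)) -> (forall i, bounded D (nth mzero gs i)) ->
  lin_indep fs ->
  (forall i, (i < size fs)%N -> exists c : nat -> R,
      nth mzero fs i = fun m => \sum_(k < size gs) c k * nth mzero gs k m) ->
  (size fs <= size gs)%N.
Proof.
move=> fsD gsD /(lin_indep_free fsD) free_fs fs_span.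
move: free_fs; rewrite /free size_map => /eqP <-.
rewrite -(size_map (mrow D) gs); apply: leq_trans (dim_span _).
apply/dimvS/span_subvP => v /(nthP 0)[i]; rewrite size_map => ltifs <-.
rewrite (nth_map mzero) //; have [c ->] := fs_span i ltifs; apply/memv_spanP; exists c.
by rewrite mrow_lincomb size_map; apply: eq_bigr => k _; rewrite (nth_map mzero).
Qed.

Local Notation derivs f ss := (map (fun s => deriv_seq s f) ss).

Section ApolarLength.
Variables (R : fieldType) (n : nat).
Implicit Types (f : mpoly R n) (ss : seq (seq 'I_n)).

Lemma al_isE f k : al_is f k -> al f = k.
Proof.
move=> al_k; have := epsilon_spec (inhabits 0%N) (al_is f) (ex_intro _ k al_k).
rewrite -/(al f); case: al_k => [[ss [<- indep]] max] [[ss' [<- indep']] max'].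
by apply/eqP; rewrite eqn_leq max // max'.
Qed.

Fixpoint words k : seq (seq 'I_n) :=
  if k is k'.+1 then [::] :: [seq i :: s | i <- enum 'I_n, s <- words k']
  else [:: [::]].

Lemma mem_words k s : (s \in words k) = (size s <= k)%N.
Proof.
elim: k s => [|k IH] [|i s] //=; rewrite in_cons /= ltnS.
apply/allpairsP/idP => [[[j t] /= [_ t_in [_ ->]]]|le_sk]; first by rewrite -IH.
by exists (i, s); rewrite /= mem_enum IH.
Qed.

Definition deriv_space D f := <<[seq mrow D (deriv_seq s f) | s <- words D]>>%VS.

Section Homogeneous.
Variables (f : mpoly R n) (e D : nat).
Hypotheses (f_homog : homog e f) (le_eD : (e <= D)%N).

Lemma bounded_deriv_seq s : bounded D (deriv_seq s f).
Proof.
move=> m /(mdeg_deriv_seq f_homog) deg_m i; apply: leq_trans (leq_mdeg m i) _.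
by rewrite (leq_trans _ le_eD) // -deg_m leq_addr.
Qed.

Lemma bounded_nth_derivs ss i : bounded D (nth mzero (derivs f ss) i).
Proof.
have [ltiss|leiss] := ltnP i (size ss).
  by rewrite (nth_map [::]) //; apply: bounded_deriv_seq.
by rewrite nth_default ?size_map //; apply: bounded0.
Qed.

Lemma mrow_deriv_in_space s : mrow D (deriv_seq s f) \in deriv_space D f.
Proof.
have [le_sD|ltDs] := leqP (size s) D.
  by apply/memv_span/(map_f (fun s => mrow D (deriv_seq s f))); rewrite mem_words.
suff -> : deriv_seq s f = mzero by rewrite mrow0 mem0v.
apply: functional_extensionality => m.
exact: deriv_seq_eq0 f_homog (leq_ltn_trans le_eD ltDs).
Qed.

Lemma lin_indep_derivs_le ss :
  lin_indep (derivs f ss) -> (size ss <= \dim (deriv_space D f))%N.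
Proof.
move=> /(lin_indep_free (bounded_nth_derivs (ss := ss))); rewrite -map_comp => free_ss.
move: (free_ss); rewrite /free size_map => /eqP <-.
by apply/dimvS/span_subvP => _ /mapP[s _ ->]; apply: mrow_deriv_in_space.
Qed.

Lemma al_homogE : al f = \dim (deriv_space D f).
Proof.
apply: al_isE; split; last exact: lin_indep_derivs_le.
have [L [freeL spanL]] := exists_free_span (fun s => mrow D (deriv_seq s f)) (words D).
exists L; split.
  by move: freeL; rewrite /free spanL size_map => /eqP.
by apply/(lin_indep_free (bounded_nth_derivs (ss := L))); rewrite -map_comp.
Qed.

End Homogeneous.

Lemma al_ge f e ss : homog e f -> lin_indep (derivs f ss) -> (size ss <= al f)%N.
Proof.
move=> f_homog; rewrite (al_homogE f_homog (leqnn e)).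
exact: (lin_indep_derivs_le f_homog (leqnn e) (ss := ss)).
Qed.

Lemma al_basis f e : homog e f ->
  exists ss, [/\ size ss = al f, lin_indep (derivs f ss) &
   forall s, exists c : nat -> R,
     deriv_seq s f = fun m => \sum_(i < size ss) c i * nth mzero (derivs f ss) i m].
Proof.
move=> f_homog; set h := fun s => mrow e (deriv_seq s f).
have [L [freeL spanL]] := exists_free_span h (words e).
have mrow_derivs : map (mrow e) (derivs f L) = map h L by rewrite -map_comp.
exists L; split.
- rewrite (al_homogE f_homog (leqnn e)) /deriv_space -spanL.
  by move: freeL; rewrite /free size_map => /eqP.
- apply/(lin_indep_free (bounded_nth_derivs f_homog (leqnn e) (ss := L))).
  by rewrite mrow_derivs.
move=> s; have := mrow_deriv_in_space f_homog (leqnn e) s.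
rewrite /deriv_space -spanL -/h => /memv_spanP[c hc]; exists c.
have comb_bounded := bounded_lincomb (k := size L) (c := c)
  (bounded_nth_derivs f_homog (leqnn e) (ss := L)).
apply: (mrow_inj (bounded_deriv_seq f_homog (leqnn e) (s := s)) comb_bounded).
rewrite mrow_lincomb hc size_map; apply: eq_bigr => i _.
by rewrite -mrow_derivs (nth_map mzero) // size_map.
Qed.

End ApolarLength.

Lemma big_mincr n (T : Type) (idx : T) (op : Monoid.com_law idx)
    (F : 'I_n -> nat -> T) (m : monom n) j :
  \big[op/idx]_k F k (mincr m j k) = op (F j (m j).+1) (\big[op/idx]_(k | k != j) F k (m k)).
Proof.
rewrite (bigD1 j) //= ffunE eqxx addn1; congr (op _ _).
by apply: eq_bigr => k /negPf kj; rewrite ffunE kj addn0.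
Qed.

Lemma mmul_linE (R : fieldType) n (l : 'I_n -> R) (g : mpoly R n) m :
  mmul (lin l) g m = \sum_i (if (0 < m i)%N then l i * g (mdecr m i) else 0).
Proof.
rewrite /mmul /lin; under eq_bigr do rewrite mulr_suml.
rewrite exchange_big /=; apply: eq_bigr => i _.
have [mi0|mi_gt0] := posnP (m i).
  rewrite big1 // => a /forallP/(_ i) le_am; case: eqP => [ai|]; last by rewrite mul0r.
  have := congr1 (fun f : monom n => f i) ai; rewrite !ffunE eqxx /= => ai1.
  by move: le_am; rewrite ai1 mi0.
have le_mdeg k : (nat_of_bool (k == i) < (mdeg m).+1)%N.
  by rewrite ltnS (leq_trans _ (leq_trans mi_gt0 (leq_mdeg m i))) //; case: (k == i).
pose a0 : {ffun 'I_n -> 'I_(mdeg m).+1} := [ffun k => Ordinal (le_mdeg k)].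
have a0E : [ffun k => val (a0 k)] = mono1 i by apply/ffunP => k; rewrite !ffunE.
rewrite (bigD1 a0) /=; last by apply/forallP => k; rewrite ffunE /=; case: eqP => [->|].
rewrite big1 ?addr0 => [|a /andP[_ a_neq] ]; last first.
  case: eqP => [ai|]; last by rewrite mul0r.
  case/eqP: a_neq; apply/ffunP => k; apply: val_inj.
  by have := congr1 (fun f : monom n => f k) ai; rewrite !ffunE.
by rewrite a0E eqxx; congr (_ * g _); apply/ffunP => k; rewrite !ffunE.
Qed.

Section LinearFormPowers.
Variables (R : fieldType) (n : nat).
Hypothesis charR0 : [pchar R] =i pred0.
Implicit Types (l : 'I_n -> R) (m : monom n).

Lemma char0_natr_eq0 k : (k%:R == 0 :> R) = (k == 0)%N.
Proof. exact: (pcharf0P _).1 charR0 k. Qed.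

Definition multinom m : R := (mdeg m)`!%:R / (\prod_i (m i)`!)%:R.

Definition pow_lin l e : mpoly R n := fun m =>
  if mdeg m == e then multinom m * \prod_i l i ^+ m i else 0.

Lemma prod_fact_neq0 m : (\prod_i (m i)`!)%:R != 0 :> R.
Proof. by rewrite char0_natr_eq0 -lt0n prodn_gt0 // => i; apply: fact_gt0. Qed.

Lemma multinom_neq0 m : multinom m != 0.
Proof.
by rewrite mulf_neq0 ?invr_eq0 ?prod_fact_neq0 // char0_natr_eq0 -lt0n fact_gt0.
Qed.

Lemma multinom_mincr m j :
  (m j).+1%:R * multinom (mincr m j) = (mdeg m).+1%:R * multinom m.
Proof.
rewrite /multinom mdeg_mincr (big_mincr _ (fun _ x => x`!)) [in RHS](bigD1 j) //=.
have := prod_fact_neq0 m; rewrite (bigD1 j) //= natrM mulf_eq0 negb_or => /andP[nz_j nz].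
rewrite factS !natrM; move: nz_j nz; set a := _`!%:R; set b := _%:R => nz_j nz.
by field; rewrite nz_j nz nat1r char0_natr_eq0.
Qed.

Lemma prod_pow_mincr l m j : \prod_k l k ^+ mincr m j k = l j * \prod_k l k ^+ m k.
Proof. by rewrite (big_mincr _ (fun k x => l k ^+ x)) [in RHS](bigD1 j) //= exprS mulrA. Qed.

Lemma pow_lin0 l : pow_lin l 0 = mone.
Proof.
apply: functional_extensionality => m; rewrite /pow_lin /mone mdeg_eq0.
case: eqP => // ->; rewrite /multinom /mdeg !big1 ?mulr1 ?divr1 // => i _; rewrite ffunE //.
Qed.

Lemma mexp_linE l e : mexp (lin l) e = pow_lin l e.
Proof.
elim: e => [|e IH]; first exact/esym/pow_lin0.
apply: functional_extensionality => m.
rewrite /mexp iterS -/(mexp (lin l) e) IH mmul_linE /pow_lin.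
case: eqP => [deg_m|ne_m]; last first.
  apply: big1 => i _; case: posnP => // mi_gt0; case: eqP; last by rewrite mulr0.
  by move=> de; case: ne_m; rewrite (mdeg_mdecr mi_gt0) de.
have term m' i : mdeg m' = e -> l i * (multinom m' * \prod_k l k ^+ m' k) =
    (mincr m' i i)%:R / e.+1%:R * (multinom (mincr m' i) * \prod_k l k ^+ mincr m' i k).
  move=> deg'; have := multinom_mincr m' i; rewrite deg' => mult'.
  have -> : multinom m' = (m' i).+1%:R * multinom (mincr m' i) / e.+1%:R.
    by rewrite mult'; field; rewrite nat1r char0_natr_eq0.
  by rewrite prod_pow_mincr ffunE eqxx addn1; field; rewrite nat1r char0_natr_eq0.
transitivity (\sum_i ((m i)%:R / e.+1%:R) * (multinom m * \prod_k l k ^+ m k)).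
  apply: eq_bigr => i _; case: posnP => [->|mi_gt0]; first by rewrite !mul0r.
  have deg' : mdeg (mdecr m i) = e by apply/eqP; rewrite -eqSS -(mdeg_mdecr mi_gt0) deg_m.
  by rewrite deg' eqxx -[in RHS](mincrK mi_gt0) term.
rewrite -mulr_suml -mulr_suml -natr_sum -/(mdeg m) deg_m divff ?mul1r //.
by rewrite char0_natr_eq0.
Qed.

Lemma pderiv_pow_lin l e j :
  pderiv j (pow_lin l e) = fun m => e%:R * l j * pow_lin l e.-1 m.
Proof.
apply: functional_extensionality => m; rewrite /pderiv /pow_lin -/(mincr m j) mdeg_mincr.
case: e => [|e] /=; first by rewrite !mul0r mulr0.
rewrite eqSS; case: eqP => [deg_m|_]; last by rewrite !mulr0.
by rewrite prod_pow_mincr mulrA multinom_mincr deg_m; ring.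
Qed.

Lemma deriv_seq_sum_pow_lin r (c : 'I_r -> R) (L : 'I_r -> 'I_n -> R) d s :
  deriv_seq s (fun m => \sum_i c i * pow_lin (L i) d m) =
  fun m => \sum_i c i * (d ^_ size s)%:R * (\prod_(x <- s) L i x) *
                   pow_lin (L i) (d - size s)%N m.
Proof.
elim: s => [|j s IH]; apply: functional_extensionality => m.
  by apply: eq_bigr => i _; rewrite subn0 ffactn0 big_nil !mulr1.
rewrite /= IH /pderiv mulr_sumr; apply: eq_bigr => i _.
have := congr1 (fun f => f m) (pderiv_pow_lin (L i) (d - size s)%N j); rewrite /pderiv mulrCA => ->.
by rewrite big_cons ffactnSr natrM subnS; ring.
Qed.

End LinearFormPowers.

Arguments multinom {R n} m.

Lemma limg_dim_subB (K : fieldType) (aT rT : vectType K) (f : 'Hom(aT, rT))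
    (U V : {vspace aT}) :
  (V <= U)%VS -> (\dim (f @: U) - \dim (f @: V) <= \dim U - \dim V)%N.
Proof.
move=> sVU; have := limg_ker_dim f U; have := limg_ker_dim f V.
have := dimvS (capvS sVU (subvv (lker f))); lia.
Qed.

Section KeyLemma.
Variables (R : fieldType) (n r d : nat).
Hypothesis charR0 : [pchar R] =i pred0.
Variables (c : 'I_r -> R) (L : 'I_r -> 'I_n -> R) (j : 'I_n).

Let F : mpoly R n := fun m => \sum_i c i * pow_lin (L i) d m.

(* By [deriv_seq_sum_pow_lin], [deriv_seq s (pderiv j F)] is the combination of
   the powers [pow_lin (L i) k], [(i, k) : I], with coefficient vector [coef s]. *)
Local Notation I := ('I_r * 'I_d.+1)%type.

Definition coef_at (s : seq 'I_n) (p : I) : R :=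
  if nat_of_ord p.2 == (d - (size s).+1)%N
  then c p.1 * (d ^_ (size s).+1)%:R * \prod_(x <- rcons s j) L p.1 x else 0.

Definition coef s : 'rV[R]_#|{: I}| := \row_k coef_at s (enum_val k).

Definition pow_mx : 'M[R]_(#|{: I}|, #|{: box n d}|) :=
  \matrix_(k, b) pow_lin (L (enum_val k : I).1) (enum_val k : I).2 (box_monom (enum_val b)).

(* Integration along [j]: the coefficient of [L i ^ k] is moved to [L i ^ k.+1]
   and divided by [k.+1 * L i j].  If [L i j = 0] the entry is the junk value
   [0^-1 = 0]; then the coefficients involved vanish anyway. *)
Definition integ_at (p p' : I) : R :=
  if (p.1 == p'.1) && (nat_of_ord p'.2 == (nat_of_ord p.2).+1)
  then ((nat_of_ord p'.2)%:R * L p.1 j)^-1 else 0.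

Definition integ_mx : 'M[R]_#|{: I}| := \matrix_(k, k') integ_at (enum_val k) (enum_val k').

Lemma coef_mul_pow_mx s : coef s *m pow_mx = mrow d (deriv_seq s (pderiv j F)).
Proof.
apply/rowP => b; rewrite !mxE -deriv_seq_rcons /F (deriv_seq_sum_pow_lin charR0) size_rcons.
under eq_bigr do rewrite !mxE.
set m := box_monom _.
rewrite (sum_enum_val (fun p => coef_at s p * pow_lin (L p.1) p.2 m)).
rewrite -(pair_bigA _ (fun i k => coef_at s (i, k) * pow_lin (L i) k m)) /=.
apply: eq_bigr => i _.
have ltd : (d - (size s).+1 < d.+1)%N by rewrite ltnS leq_subr.
rewrite (bigD1 (Ordinal ltd)) //= big1 ?addr0 => [|k /eqP ne]; first by rewrite /coef_at /= eqxx.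
rewrite /coef_at /=; case: eqP => [k_eq|]; last by rewrite mul0r.
by case: ne; apply: val_inj.
Qed.

Lemma coef_rcons_mul_integ s : ((size s).+2 <= d)%N -> coef (rcons s j) *m integ_mx = coef s.
Proof.
move=> le_sd; apply/rowP => k'; rewrite !mxE; under eq_bigr do rewrite !mxE.
rewrite (sum_enum_val (fun p => coef_at (rcons s j) p * integ_at p (enum_val k'))).
case: (enum_val k') => i' [[|k0] lt_k0d] /=.
  rewrite big1 => [|p _]; last by rewrite /integ_at /= andbF mulr0.
  by rewrite /coef_at /=; case: eqP => // d_eq; move: d_eq le_sd; lia.
rewrite -(pair_bigA _ (fun i k =>
  coef_at (rcons s j) (i, k) * integ_at (i, k) (i', Ordinal lt_k0d))).
have lt_k0 : (k0 < d.+1)%N by apply: ltnW.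
rewrite (bigD1 i') //= [X in _ + X]big1 ?addr0 => [|i /negPf ne_i]; last first.
  by rewrite big1 // => k _; rewrite /integ_at /= ne_i mulr0.
rewrite (bigD1 (Ordinal lt_k0)) //= [X in _ + X]big1 ?addr0 => [|k /eqP ne_k]; last first.
  rewrite /integ_at /= eqxx /=; case: eqP => [[k_eq]|]; last by rewrite mulr0.
  by case: ne_k; apply: val_inj.
rewrite /integ_at /coef_at /= !eqxx /= size_rcons -!cats1 !big_cat !big_seq1 /=.
have -> : (k0 == d - (size s).+2)%N = (k0.+1 == d - (size s).+1)%N by apply/eqP/eqP; lia.
case: eqP => [k0_eq|]; last by rewrite mul0r.
rewrite ffactnSr -k0_eq natrM.
have [->|Lj_neq0] := eqVneq (L i' j) 0; first by rewrite !mulr0 mul0r.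
by field; rewrite Lj_neq0 nat1r char0_natr_eq0.
Qed.

Lemma coef_eq0 s : (d < (size s).+1)%N -> coef s = 0.
Proof.
move=> lt_ds; apply/rowP => k; rewrite !mxE /coef_at.
by case: ifP => // _; rewrite ffact_small // mulr0 mul0r.
Qed.

Definition unit_coef (i : 'I_r) : 'rV[R]_#|{: I}| := \row_k ((enum_val k == (i, ord0))%:R).

Definition const_space := <<map unit_coef (enum 'I_r)>>%VS.

Lemma dim_const_space : (\dim const_space <= r)%N.
Proof. by apply: leq_trans (dim_span _) _; rewrite size_map size_enum_ord. Qed.

Lemma coef_in_const_space s : (d <= (size s).+1)%N -> coef s \in const_space.
Proof.
move=> le_ds; suff -> : coef s = \sum_(i < r) coef_at s (i, ord0) *: unit_coef i.
  by apply: memv_suml => i _; apply/memvZ/memv_span/map_f; rewrite mem_enum.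
apply/rowP => k; rewrite !mxE summxE; under eq_bigr do rewrite !mxE.
case: (enum_val k) => i' [[|k0] lt_k0d] /=.
  have -> : (i', Ordinal lt_k0d) = (i', ord0) by congr pair; apply: val_inj.
  rewrite (bigD1 i') //= eqxx mulr1 big1 ?addr0 // => i /negPf ne_i.
  by case: eqP => [[i_eq]|]; [move: ne_i; rewrite i_eq eqxx | rewrite mulr0].
rewrite big1 => [|i _]; last by case: eqP => [[]|]; rewrite ?mulr0.
by rewrite /coef_at /=; case: eqP => // k0_eq; move: k0_eq le_ds; lia.
Qed.

Definition coef_space := <<map coef (words n d)>>%VS.
Definition coef_space_rcons := <<map (fun s => coef (rcons s j)) (words n d)>>%VS.

Lemma coef_space_rcons_sub : (coef_space_rcons <= coef_space)%VS.
Proof.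
apply/span_subvP => v /mapP[s]; rewrite mem_words => le_sd ->.
have [lt_sd|le_ds] := ltnP (size s) d.
  by apply/memv_span/map_f; rewrite mem_words size_rcons.
by rewrite coef_eq0 ?mem0v // size_rcons ltnS (leq_trans le_ds).
Qed.

Lemma dim_coef_space : (\dim coef_space <= \dim coef_space_rcons + r)%N.
Proof.
pose integ := linfun (mulmxr integ_mx : 'rV[R]_#|{: I}| -> 'rV[R]_#|{: I}|).
have sub : (coef_space <= integ @: coef_space_rcons + const_space)%VS.
  apply/span_subvP => v /mapP[s _ ->].
  have [le_sd|lt_ds] := leqP (size s).+2 d; last first.
    by apply/(subvP (addvSr _ _))/coef_in_const_space; rewrite -ltnS.
  apply/(subvP (addvSl _ _)); rewrite -(coef_rcons_mul_integ le_sd).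
  have -> : coef (rcons s j) *m integ_mx = integ (coef (rcons s j)) by rewrite lfunE.
  apply/memv_img/memv_span/(map_f (fun s => coef (rcons s j))).
  by rewrite mem_words; lia.
apply: leq_trans (dimvS sub) _; apply: leq_trans (dimv_add_leqif _ _).1 _.
apply: leq_add dim_const_space.
by rewrite -(limg_ker_dim integ coef_space_rcons) leq_addl.
Qed.

Lemma homog_pow_sum : homog d F.
Proof.
move=> m Fm; apply/eqP; apply: contraNT Fm => deg_m.
by apply/eqP/big1 => i _; rewrite /pow_lin (negPf deg_m) mulr0.
Qed.

Lemma al_pderiv_pow_sum : (al (pderiv j F) - al (pderiv j (pderiv j F)) <= r)%N.
Proof.
pose pow := linfun (mulmxr pow_mx : 'rV[R]_#|{: I}| -> 'rV[R]_#|{: box n d}|).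
have space_img s2 (f : mpoly R n) : (forall s, coef (s2 s) *m pow_mx = mrow d (deriv_seq s f)) ->
    deriv_space d f = (pow @: <<map (fun s => coef (s2 s)) (words n d)>>)%VS.
  move=> coef_f; rewrite limg_span -map_comp; congr span; apply: eq_map => s /=.
  by rewrite lfunE /= coef_f.
rewrite (al_homogE (homog_deriv_seq (s := [:: j]) homog_pow_sum) (leq_subr _ _)).
rewrite (al_homogE (homog_deriv_seq (s := [:: j; j]) homog_pow_sum) (leq_subr _ _)).
rewrite (@space_img id) => [|s]; last exact: coef_mul_pow_mx.
rewrite (@space_img (rcons^~ j)) => [|s]; last by rewrite coef_mul_pow_mx deriv_seq_rcons.
apply: leq_trans (limg_dim_subB pow coef_space_rcons_sub) _.
by have := dim_coef_space; lia.
Qed.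

End KeyLemma.

Section WaringDecomposition.
Variables (R : fieldType) (n d : nat).
Hypothesis charR0 : [pchar R] =i pred0.

Lemma vandermonde_dual : exists a : 'I_d.+1 -> 'I_d.+1 -> R,
  forall e k : 'I_d.+1, \sum_s a e s * (nat_of_ord s)%:R ^+ k = (k == e)%:R.
Proof.
pose V := Vandermonde d.+1 (\row_(s < d.+1) (nat_of_ord s)%:R : 'rV[R]_d.+1).
have V_unit : V \in unitmx.
  rewrite unitmxE det_Vandermonde unitfE; apply/prodf_neq0 => i _.
  apply/prodf_neq0 => k lt_ik; rewrite !mxE -natrB 1?ltnW //.
  by rewrite char0_natr_eq0 // subn_eq0 -ltnNge.
exists (fun e s => invmx V s e) => e k.
have := congr1 (fun M : 'M_d.+1 => M k e) (mulmxV V_unit); rewrite !mxE => <-.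
by apply: eq_bigr => s _; rewrite !mxE mulrC.
Qed.

Lemma sum_pow_lin_dual (a : 'I_d.+1 -> 'I_d.+1 -> R) (b : box n d) m :
  (forall e k : 'I_d.+1, \sum_s a e s * (nat_of_ord s)%:R ^+ k = (k == e)%:R) ->
  mdeg m = d ->
  \sum_(t : box n d) (\prod_i a (b i) (t i)) * pow_lin (fun i => (nat_of_ord (t i))%:R) d m
    = multinom m * (box_monom b == m)%:R.
Proof.
move=> dual deg_m; have le_md i : (m i < d.+1)%N by rewrite ltnS -deg_m leq_mdeg.
rewrite /pow_lin deg_m eqxx.
transitivity (multinom m *
    \sum_(t : box n d) \prod_i (a (b i) (t i) * (nat_of_ord (t i))%:R ^+ m i)).
  by rewrite mulr_sumr; apply: eq_bigr => t _; rewrite big_split /=; ring.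
congr (_ * _); rewrite -(bigA_distr_bigA (fun i s => a (b i) s * (nat_of_ord s)%:R ^+ m i)).
transitivity (\prod_i ((Ordinal (le_md i) == b i)%:R : R)).
  by apply: eq_bigr => i _; rewrite -dual.
rewrite -natr_prod; congr (_ %:R).
have [bm|ne_bm] := eqVneq (box_monom b) m.
  rewrite big1 // => i _; suff -> : Ordinal (le_md i) == b i by [].
  by apply/eqP; apply: val_inj; rewrite /= -bm ffunE.
have [i ne_i] : exists i, Ordinal (le_md i) != b i.
  apply/existsP; apply: contraNT ne_bm => /existsPn same; apply/eqP/ffunP => i.
  by have := same i; rewrite negbK ffunE => /eqP <-.
by rewrite (bigD1 i) //= (negbTE ne_i) mul0n.
Qed.

Lemma waring_decomp_exists (F : mpoly R n) : homog d F -> exists r, waring_decomp F d r.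
Proof.
move=> F_homog; have [a dual] := vandermonde_dual.
pose P := (box n d * box n d)%type.
pose c (p : P) := F (box_monom p.1) / multinom (box_monom p.1) * \prod_i a (p.1 i) (p.2 i).
pose l (p : P) i := (nat_of_ord (p.2 i))%:R : R.
exists #|{: P}|, (fun k => c (enum_val k)), (fun k => l (enum_val k)) => m.
under eq_bigr do rewrite mexp_linE //.
rewrite (sum_enum_val (fun p => c p * pow_lin (l p) d m)).
rewrite -(pair_bigA _ (fun b t => c (b, t) * pow_lin (l (b, t)) d m)) /=.
have [deg_m|ne_m] := eqVneq (mdeg m) d; last first.
  rewrite big1 => [|b _]; last by rewrite big1 // => t _; rewrite /pow_lin (negPf ne_m) mulr0.
  by apply/eqP; apply: contraNT ne_m => /F_homog ->; rewrite eqxx.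
under eq_bigr => b _.
  rewrite (eq_bigr (fun t : box n d => F (box_monom b) / multinom (box_monom b) *
    ((\prod_i a (b i) (t i)) * pow_lin (fun i => (nat_of_ord (t i))%:R) d m))); last first.
    by move=> t _; rewrite /c mulrA.
  by rewrite -mulr_sumr sum_pow_lin_dual //; over.
have [b0 b0m] : exists b0 : box n d, box_monom b0 = m.
  by apply: box_monom_surj => i; rewrite -deg_m leq_mdeg.
rewrite (bigD1 b0) //= b0m eqxx mulr1 big1 ?addr0 => [|b ne_b].
  by field; apply: multinom_neq0.
case: eqP => [bm|]; last by rewrite !mulr0.
case/eqP: ne_b; apply/ffunP => i; apply: val_inj.
by have := congr1 (fun f : monom n => f i) (etrans bm (esym b0m)); rewrite !ffunE.
Qed.

End WaringDecomposition.

Lemma exists_minimal (P : nat -> Prop) :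
  (exists k, P k) -> exists k, P k /\ forall k', P k' -> (k <= k')%N.
Proof.
case=> k; elim/ltn_ind: k => k IH Pk.
have [[k' [Pk' lt_k'k]]|min_k] := classic (exists k', P k' /\ (k' < k)%N).
  exact: IH Pk'.
exists k; split=> // k' Pk'; rewrite leqNgt; apply/negP => lt_k'k.
by apply: min_k; exists k'.
Qed.

Section WaringRank.
Variables (R : fieldType) (n d : nat).
Hypothesis charR0 : [pchar R] =i pred0.
Implicit Type F : mpoly R n.

Lemma waring_rankP F : homog d F -> waring_decomp F d (waring_rank F d).
Proof.
move=> F_homog; have := exists_minimal (waring_decomp_exists charR0 F_homog).
by case/(epsilon_spec (inhabits 0%N)).
Qed.

Lemma al_pderiv_sub_le F r j : waring_decomp F d r ->
  (al (pderiv j F) - al (pderiv j (pderiv j F)) <= r)%N.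
Proof.
case=> c [L F_eq]; suff -> : F = fun m => \sum_i c i * pow_lin (L i) d m.
  exact: al_pderiv_pow_sum.
apply: functional_extensionality => m; rewrite F_eq.
by apply: eq_bigr => i _; rewrite mexp_linE.
Qed.

End WaringRank.

Section SeparatedVariables.
Variables (R : fieldType) (p q : nat).
Implicit Types (g : mpoly R p) (h : mpoly R q) (m : monom (p + q)).

Definition monom_x m : monom p := [ffun i => m (lshift q i)].
Definition monom_y m : monom q := [ffun k => m (rshift p k)].
Definition monom_xy (a : monom p) (b : monom q) : monom (p + q) :=
  [ffun z => match split z with inl i => a i | inr k => b k end].

Definition mul_xy g h : mpoly R (p + q) := fun m => g (monom_x m) * h (monom_y m).

Lemma monom_x_xy a b : monom_x (monom_xy a b) = a.
Proof. by apply/ffunP => i; rewrite !ffunE -[lshift q i]/(unsplit (inl i)) unsplitK. Qed.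

Lemma monom_y_xy a b : monom_y (monom_xy a b) = b.
Proof. by apply/ffunP => k; rewrite !ffunE -[rshift p k]/(unsplit (inr k)) unsplitK. Qed.

Lemma mdeg_xy m : mdeg m = (mdeg (monom_x m) + mdeg (monom_y m))%N.
Proof. by rewrite /mdeg big_split_ord; congr (_ + _)%N; apply: eq_bigr => i _; rewrite ffunE. Qed.

Lemma homog_mul_xy eg eh g h : homog eg g -> homog eh h -> homog (eg + eh) (mul_xy g h).
Proof.
move=> g_homog h_homog m; rewrite mulf_eq0 negb_or => /andP[/g_homog <- /h_homog <-].
exact: mdeg_xy.
Qed.

Lemma homog_emb_y d h : homog d h -> homog d (emb_y (p := p) h).
Proof.
move=> h_homog m; rewrite /emb_y; case: ifP => [/forallP x0 /h_homog <-|]; last by rewrite eqxx.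
rewrite mdeg_xy; suff /eqP -> : mdeg (monom_x m) == 0%N by [].
by rewrite mdeg_eq0; apply/eqP/ffunP => i; rewrite !ffunE; apply/eqP/x0.
Qed.

Lemma mmul_emb g h : mmul (emb_x g) (emb_y h) = mul_xy g h.
Proof.
apply: functional_extensionality => m; rewrite /mmul.
have le_mdeg z : (m z < (mdeg m).+1)%N by rewrite ltnS leq_mdeg.
pose a0 : {ffun 'I_(p + q) -> 'I_(mdeg m).+1} :=
  [ffun z : 'I_(p + q) => if (z < p)%N then Ordinal (le_mdeg z) else ord0].
have a0E z : val (a0 z) = if (z < p)%N then m z else 0%N by rewrite ffunE; case: ifP.
have ltp_l (i : 'I_p) : (lshift q i < p)%N := ltn_ord i.
have ltp_r (k : 'I_q) : (rshift p k < p)%N = false by rewrite /= ltnNge leq_addr.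
rewrite (bigD1 a0) /=; last by apply/forallP => z; rewrite a0E; case: ifP.
rewrite big1 ?addr0 => [|a /andP[/forallP le_am ne_a]].
  rewrite /emb_x /emb_y !ifT; last 2 first.
  - by apply/forallP => i; rewrite ffunE a0E ltp_l subnn.
  - by apply/forallP => k; rewrite ffunE a0E ltp_r.
  by congr (g _ * h _); apply/ffunP => i; rewrite !ffunE ?ltp_l ?ltp_r /= ?subn0.
rewrite /emb_x /emb_y; case: ifP => [/forallP ax0|]; last by rewrite mul0r.
case: ifP => [/forallP ay0|]; last by rewrite mulr0.
case/eqP: ne_a; apply/ffunP => z; apply: val_inj; rewrite a0E.
case: split_ordP => [i ->|k ->]; rewrite ?ltp_l ?ltp_r.
  have := ay0 i; rewrite ffunE subn_eq0 => le_ma; apply/eqP; rewrite eqn_leq le_ma.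
  by rewrite andbT le_am.
by have := ax0 k; rewrite ffunE => /eqP.
Qed.

Lemma pderiv_mul_xy_l g h (i : 'I_p) :
  pderiv (lshift q i) (mul_xy g h) = mul_xy (pderiv i g) h.
Proof.
apply: functional_extensionality => m; rewrite /pderiv /mul_xy mulrA; congr (_ * g _ * h _).
- by rewrite ffunE.
- by apply/ffunP => k; rewrite !ffunE eq_lshift.
- by apply/ffunP => k; rewrite !ffunE eq_rlshift addn0.
Qed.

Lemma pderiv_mul_xy_r g h (k : 'I_q) :
  pderiv (rshift p k) (mul_xy g h) = mul_xy g (pderiv k h).
Proof.
apply: functional_extensionality => m; rewrite /pderiv /mul_xy mulrCA; congr (_ * (_ * h _)).
- by congr g; apply/ffunP => i; rewrite !ffunE eq_lrshift addn0.
- by rewrite ffunE.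
- by apply/ffunP => i; rewrite !ffunE eq_rshift.
Qed.

Lemma deriv_seq_mul_xy g h s : exists sx sy,
  deriv_seq s (mul_xy g h) = mul_xy (deriv_seq sx g) (deriv_seq sy h).
Proof.
elim: s => [|z s [sx [sy IH]]]; first by exists [::], [::].
rewrite /= IH; case: (split_ordP z) => [i ->|k ->].
  by exists (i :: sx), sy; rewrite pderiv_mul_xy_l.
by exists sx, (k :: sy); rewrite pderiv_mul_xy_r.
Qed.

Lemma deriv_seq_cat_mul_xy g h (sx : seq 'I_p) (sy : seq 'I_q) :
  deriv_seq (map (@lshift p q) sx ++ map (@rshift p q) sy) (mul_xy g h) =
  mul_xy (deriv_seq sx g) (deriv_seq sy h).
Proof.
rewrite /deriv_seq foldr_cat.
have -> : foldr (@pderiv R _) (mul_xy g h) (map (@rshift p q) sy) =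
    mul_xy g (foldr (@pderiv R _) h sy).
  by elim: sy => //= k sy ->; rewrite pderiv_mul_xy_r.
by elim: sx => //= i sx ->; rewrite pderiv_mul_xy_l.
Qed.

End SeparatedVariables.

Lemma sum_ord_mul (V : nmodType) a b (F : nat -> V) :
  \sum_(k < (a * b)%N) F k = \sum_(x < a) \sum_(y < b) F (x * b + y)%N.
Proof.
rewrite -(big_mkord xpredT) big_nat_mul big_mkord; apply: eq_bigr => x _.
rewrite -{1}[(x * b)%N]add0n big_addn mulSn addnK big_mkord.
by apply: eq_bigr => y _; rewrite addnC.
Qed.

Lemma divn_mulDn b x y : (y < b)%N -> ((x * b + y) %/ b = x)%N.
Proof. by move=> lt_yb; rewrite divnMDl ?divn_small ?addn0 // (leq_ltn_trans _ lt_yb). Qed.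

Lemma modn_mulDn b x y : (y < b)%N -> ((x * b + y) %% b = y)%N.
Proof. by move=> lt_yb; rewrite modnMDl modn_small. Qed.

Section Tensor.
Variables (R : fieldType) (p q : nat).
Variables (us : seq (mpoly R p)) (vs : seq (mpoly R q)).
Local Notation a := (size us).
Local Notation b := (size vs).

(* All products [u(x) v(y)], the product [us`_x * vs`_y] sitting at index [x * b + y]. *)
Definition tensor : seq (mpoly R (p + q)) :=
  [seq mul_xy (nth mzero us (k %/ b)) (nth mzero vs (k %% b)) | k <- iota 0 (a * b)%N].

Lemma size_tensor : size tensor = (a * b)%N.
Proof. by rewrite size_map size_iota. Qed.

Lemma nth_tensor x y : (x < a)%N -> (y < b)%N ->
  nth mzero tensor (x * b + y)%N = mul_xy (nth mzero us x) (nth mzero vs y).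
Proof.
move=> lt_xa lt_yb; have lt_ab : (x * b + y < a * b)%N.
  by apply: (@leq_trans (x * b + b)); rewrite ?ltn_add2l // -mulSnr leq_mul2r lt_xa orbT.
rewrite (nth_map 0%N) ?size_iota // nth_iota // add0n.
by rewrite divn_mulDn // modn_mulDn.
Qed.

Lemma lin_indep_tensor : lin_indep us -> lin_indep vs -> lin_indep tensor.
Proof.
move=> /lin_indepP indep_us /lin_indepP indep_vs; apply/lin_indepP => c c0.
suff c_xy x y : (x < a)%N -> (y < b)%N -> c (x * b + y)%N = 0.
  rewrite size_tensor => k lt_kab; have b_gt0 : (0 < b)%N.
    by rewrite lt0n; apply: contraTneq lt_kab => ->; rewrite muln0.
  by rewrite (divn_eq k b) c_xy ?ltn_mod // ltn_divLR.
move=> lt_xa lt_yb; apply: (indep_us (fun x => c (x * b + y)%N)) lt_xa => mx.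
pose cy y' := \sum_(x < a) c (x * b + y')%N * nth mzero us x mx.
apply: (indep_vs cy) lt_yb => my; rewrite -[RHS](c0 (monom_xy mx my)).
rewrite size_tensor (sum_ord_mul _ _ (fun k => c k * nth mzero tensor k (monom_xy mx my))).
rewrite exchange_big /=; apply: eq_bigr => y' _; rewrite /cy mulr_suml.
by apply: eq_bigr => x' _; rewrite nth_tensor // /mul_xy monom_x_xy monom_y_xy mulrA.
Qed.

Lemma mul_xy_lincomb (alpha beta : nat -> R) :
  mul_xy (fun m => \sum_(x < a) alpha x * nth mzero us x m)
         (fun m => \sum_(y < b) beta y * nth mzero vs y m) =
  fun m => \sum_(k < size tensor) alpha (k %/ b)%N * beta (k %% b)%N * nth mzero tensor k m.
Proof.
apply: functional_extensionality => m; rewrite size_tensor.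
rewrite (sum_ord_mul _ _ (fun k => alpha (k %/ b)%N * beta (k %% b)%N * nth mzero tensor k m)).
rewrite /mul_xy mulr_suml.
apply: eq_bigr => x _; rewrite mulr_sumr; apply: eq_bigr => y _.
by rewrite divn_mulDn // modn_mulDn // nth_tensor // /mul_xy; ring.
Qed.

End Tensor.

Lemma al_mul_xy (R : fieldType) p q eg eh (g : mpoly R p) (h : mpoly R q) :
  homog eg g -> homog eh h -> al (mul_xy g h) = (al g * al h)%N.
Proof.
move=> g_homog h_homog; have gh_homog := homog_mul_xy g_homog h_homog.
have [ssg [<- indep_g span_g]] := al_basis g_homog.
have [ssh [<- indep_h span_h]] := al_basis h_homog.
set us := derivs g ssg; set vs := derivs h ssh.
have [size_us size_vs] : size us = size ssg /\ size vs = size ssh by rewrite !size_map.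
pose ss := [seq map (@lshift p q) (nth [::] ssg (k %/ size ssh)) ++
                map (@rshift p q) (nth [::] ssh (k %% size ssh))
          | k <- iota 0 (size ssg * size ssh)%N].
have derivs_ss : derivs (mul_xy g h) ss = tensor us vs.
  rewrite -map_comp /tensor size_us size_vs; apply/eq_in_map => k; rewrite mem_iota add0n.
  move=> lt_k; have ssh_gt0 : (0 < size ssh)%N.
    by rewrite lt0n; apply: contraTneq lt_k => ->; rewrite muln0.
  rewrite /= deriv_seq_cat_mul_xy !(nth_map [::]) ?ltn_mod // ltn_divLR //.
have bounded_ss := bounded_nth_derivs gh_homog (leqnn _) (ss := ss).
rewrite derivs_ss in bounded_ss.
apply: al_isE; split.
  exists ss; split; first by rewrite size_map size_iota.
  by rewrite derivs_ss; apply: lin_indep_tensor.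
move=> ss' indep'; rewrite -(size_map (fun s => deriv_seq s (mul_xy g h)) ss').
rewrite -size_us -size_vs -size_tensor.
apply: lin_indep_size_le (bounded_nth_derivs gh_homog (leqnn _) (ss := ss')) bounded_ss indep' _.
move=> i; rewrite size_map => lt_i; rewrite (nth_map [::]) //.
have [sx [sy ->]] := deriv_seq_mul_xy g h (nth [::] ss' i).
have [alpha ->] := span_g sx; have [beta ->] := span_h sy.
exists (fun k => alpha (k %/ size vs)%N * beta (k %% size vs)%N).
by rewrite -size_us -size_vs mul_xy_lincomb.
Qed.

Section MainTheorem.
Variable R : fieldType.
Hypothesis charR0 : [pchar R] =i pred0.

Lemma GHKE p q (G : mpoly R p) (H K : mpoly R q) :
  GHK G H K = fun m => mul_xy G H m + emb_y K m.
Proof. by rewrite /GHK mmul_emb. Qed.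

Lemma homog_GHK p q eG eH d (G : mpoly R p) (H K : mpoly R q) :
  homog eG G -> homog eH H -> homog d K -> (eG + eH)%N = d -> homog d (GHK G H K).
Proof.
move=> G_homog H_homog K_homog deg_GH m; rewrite GHKE.
have [->|GH_m] := eqVneq (mul_xy G H m) 0; first by rewrite add0r; apply: homog_emb_y.
by move=> _; rewrite -deg_GH; apply: homog_mul_xy GH_m.
Qed.

Lemma pderiv_GHK p q (G : mpoly R p) (H K : mpoly R q) j :
  pderiv (lshift q j) (GHK G H K) = mul_xy (pderiv j G) H.
Proof.
rewrite -pderiv_mul_xy_l GHKE; apply: functional_extensionality => m.
rewrite /pderiv mulrDr /emb_y ifF ?mulr0 ?addr0 //.
by apply/negbTE/forallP => /(_ j); rewrite ffunE eqxx addn1.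
Qed.

Lemma al_pderiv_lt n e (f : mpoly R n) j m0 : homog e f -> f m0 != 0 ->
  (al (pderiv j f) < al f)%N.
Proof.
move=> f_homog f_m0; have deg_m0 := f_homog _ f_m0.
have [ss [<- indep _]] := al_basis (homog_deriv_seq (s := [:: j]) f_homog).
have := al_ge (ss := [::] :: map (rcons^~ j) ss) f_homog; rewrite /= size_map; apply.
rewrite -map_comp (eq_map (fun s => deriv_seq_rcons f s j)).
apply: lin_indep_cons indep _ f_m0 => i.
have [lt_i|le_i] := ltnP i (size ss); last by rewrite nth_default ?size_map.
rewrite (nth_map [::]) // -deriv_seq_rcons; apply/eqP; apply: contraT.
by move=> /(mdeg_deriv_seq f_homog); rewrite deg_m0 size_rcons; lia.
Qed.

Lemma waring_rank_GHK_ge p q eG eH d (G : mpoly R p) (H K : mpoly R q) (j : 'I_p) :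
  homog eG G -> homog eH H -> homog d K -> (eG + eH)%N = d ->
  ((al (pderiv j G) - al (pderiv j (pderiv j G))) * al H <= waring_rank (GHK G H K) d)%N.
Proof.
move=> G_homog H_homog K_homog deg_GH.
have F_homog := homog_GHK G_homog H_homog K_homog deg_GH.
have := al_pderiv_sub_le charR0 (lshift q j) (waring_rankP charR0 F_homog).
rewrite pderiv_GHK pderiv_mul_xy_l.
rewrite (al_mul_xy (homog_deriv_seq (s := [:: j]) G_homog) H_homog).
by rewrite (al_mul_xy (homog_deriv_seq (s := [:: j; j]) G_homog) H_homog) -mulnBl.
Qed.

Lemma mvar_lin n (i : 'I_n) : mvar i = lin (fun k => (k == i)%:R : R).
Proof.
apply: functional_extensionality => m; rewrite /mvar /lin (bigD1 i) //= eqxx.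
by rewrite big1 ?addr0 => [|k /negPf ->]; case: ifP.
Qed.

Lemma waring_rank_GHK_pow_ge p q a eH d (H K : mpoly R q) :
  (1 <= a)%N -> homog eH H -> homog d K -> (a + eH)%N = d ->
  (al H <= waring_rank (GHK (mexp (mvar (ord0 : 'I_p.+1)) a) H K) d)%N.
Proof.
move=> a_gt0 H_homog K_homog deg_GH.
pose e0 (k : 'I_p.+1) : R := (k == ord0)%:R.
pose G : mpoly R p.+1 := mexp (mvar ord0) a.
have G_pow : G = pow_lin e0 a by rewrite /G mvar_lin mexp_linE.
have G_homog : homog a G.
  by rewrite G_pow => m; rewrite /pow_lin; case: ifP => [/eqP //|_]; rewrite eqxx.
apply: leq_trans (waring_rank_GHK_ge ord0 G_homog H_homog K_homog deg_GH).
rewrite leq_pmull // subn_gt0.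
pose m0 : monom p.+1 := [ffun i => if i == ord0 then a.-1 else 0%N].
have deg_m0 : mdeg m0 = a.-1.
  rewrite /mdeg (bigD1 ord0) //= ffunE eqxx big1 ?addn0 // => i /negPf i0.
  by rewrite ffunE i0.
apply: (al_pderiv_lt (m0 := m0) ord0 (homog_deriv_seq (s := [:: ord0]) G_homog)).
rewrite /= G_pow (pderiv_pow_lin charR0) /e0 eqxx mulr1 /pow_lin deg_m0 eqxx.
rewrite big1 => [|i _]; last by rewrite ffunE; case: eqP => _; rewrite ?expr1n ?expr0.
by rewrite mulr1 mulf_neq0 ?multinom_neq0 // char0_natr_eq0 // -lt0n.
Qed.

End MainTheorem.

Close Scope ring_scope.

Theorem mainTheorem7 (R : closedFieldType) (charR0 : [pchar R]%R =i pred0) :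
  (forall (p q eG eH d : nat) (G : mpoly R p) (H K : mpoly R q) (j : 'I_p),
     homog eG G -> homog eH H -> homog d K -> (eG + eH)%N = d ->
     ((al (pderiv j G) - al (pderiv j (pderiv j G))) * al H
        <= waring_rank (GHK G H K) d)%N)
  /\
  (forall (p q a eH d : nat) (H K : mpoly R q),
     (1 <= a)%N -> homog eH H -> homog d K -> (a + eH)%N = d ->
     (al H <= waring_rank (GHK (mexp (mvar (ord0 : 'I_p.+1)) a) H K) d)%N).
Proof.
split=> [p q eG eH d G H K j|p q a eH d H K].
  exact: waring_rank_GHK_ge.
exact: waring_rank_GHK_pow_ge.
Qed.
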